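(* Let $0<p<1$ and let $k\ge 1$ be an integer. A coin showing heads with probability $p$ and tails with probability $1-p$ is flipped independently until $k$ consecutive heads first appear; let $Y$ be the number of flips. Then \[ E(Y) = p^{-1}+p^{-2}+\cdots+p^{-k} = \frac{1-p^k}{(1-p)p^k},\qquad E(Y^2) = \frac{2(1-p^k)}{(1-p)^2 p^{2k}} - \frac{2k+1-p^k}{(1-p)p^k}, \] \[ E(Y^3) = \frac{6(1-p^k)}{(1-p)^3 p^{3k}} - \frac{12k+6-(6k+6)p^k}{(1-p)^2 p^{2k}} + \frac{3k^2+3k+1-p^k}{(1-p)p^k}, \] \[ E(Y^4) = \frac{24(1-p^k)}{(1-p)^4 p^{4k}} - \frac{72k+36-(48k+36)p^k}{(1-p)^3 p^{3k}} + \frac{48k^2+48k+14-(12k^2+24k+14)p^k}{(1-p)^2 p^{2k}} - \frac{4k^3+6k^2+4k+1-p^k}{(1-p) p^k}. \] *)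

From HB Require Import structures.
From mathcomp Require Import all_boot all_order all_algebra.
From mathcomp Require Import all_classical all_reals all_analysis.
Set Implicit Arguments. Unset Strict Implicit. Unset Printing Implicit Defensive.
Import Order.TTheory GRing.Theory Num.Theory.
Import numFieldNormedType.Exports.
Local Open Scope ring_scope.
Local Open Scope classical_set_scope.

(* A finite flip record: true = heads, false = tails. *)

Definition ends_with_run (k : nat) (s : seq bool) : bool :=
  (k <= size s)%N && all id (drop (size s - k) s).

(* [first_run_at k s]: k consecutive heads appear for the first time exactly
   at the last flip of s (i.e. the stopping time Y equals size s). *)
Definition first_run_at (k : nat) (s : seq bool) : bool :=
  ends_with_run k s &&
  [forall m : 'I_(size s), ~~ ends_with_run k (take m s)].

Definition flip_weight (R : pzRingType) (p : R) (s : seq bool) : R :=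
  \prod_(b <- s) (if b then p else 1 - p).

Definition probY (R : pzRingType) (p : R) (k n : nat) : R :=
  \sum_(s : n.-tuple bool | first_run_at k s) flip_weight p s.

Definition moment_is (R : realType) (p : R) (k j : nat) (v : R) : Prop :=
  (fun N : nat => \sum_(0 <= n < N) (n%:R) ^+ j * probY p k n) @ \oo --> v.

(* Let u n = P(Y > n) be the weight of the length-n records without a run of
   k heads, and U_i = sum_m m^i u m.  Since P(Y = n+1) = u n - u (n+1), Abel
   summation gives E(Y^j) = sum_(i<j) C(j,i) U_i.  On the other hand Y = m+k+1
   exactly when the first m flips contain no run and are followed by T H^k, so
   P(Y = m+k+1) = (1-p) p^k u m; with P(Y = k) = p^k this gives
   E(Y^j) = p^k k^j + (1-p) p^k sum_(i<=j) C(j,i) (k+1)^(j-i) U_i.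
   Equating the two expressions determines U_0, ..., U_3 one after the other,
   hence the first four moments.  The same identity makes u decay
   geometrically, so that all the series involved converge. *)

From HB Require Import structures.
From mathcomp Require Import all_boot all_order all_algebra.
From mathcomp Require Import all_classical all_reals all_analysis.
From mathcomp Require Import zify ring lra.
Import Order.TTheory GRing.Theory Num.Theory.
Import numFieldNormedType.Exports.
Local Open Scope ring_scope.

Definition no_run k (s : seq bool) : bool :=
  all (fun m => ~~ ends_with_run k (take m s)) (iota 0 (size s).+1).

Lemma ends_with_run_cat k t r :
  size r = k -> ends_with_run k (t ++ r) = (r == nseq k true).
Proof.
move=> <-; rewrite /ends_with_run size_cat leq_addl addnK drop_size_cat //.
rewrite (eq_all (a2 := pred1 true)); last by case.
by apply/all_pred1P/eqP.
Qed.

Lemma ends_with_run_false k t j :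
  (j < k)%N -> ends_with_run k (t ++ false :: nseq j true) = false.
Proof.
move=> ltjk; rewrite /ends_with_run size_cat /= size_nseq.
case: leqP => //= lek; rewrite drop_cat.
case: ltnP => [_|le]; first by rewrite all_cat /= andbF.
by have -> : (size t + j.+1 - k - size t = 0)%N by lia.
Qed.

Lemma first_run_atE k s : first_run_at k s =
  ends_with_run k s && all (fun m => ~~ ends_with_run k (take m s)) (iota 0 (size s)).
Proof.
congr andb; apply/forallP/allP => [noprefix m|noprefix m].
  by rewrite mem_iota add0n => ltm; exact: (noprefix (Ordinal ltm)).
by apply: noprefix; rewrite mem_iota add0n ltn_ord.
Qed.

Lemma prefixes_rcons k t b :
  all (fun m => ~~ ends_with_run k (take m (rcons t b))) (iota 0 (size t).+1) =
  no_run k t.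
Proof.
apply: eq_in_all => m; rewrite mem_iota add0n ltnS => lem.
by rewrite -cats1 takel_cat.
Qed.

Lemma no_run_rcons k t b :
  no_run k (rcons t b) = no_run k t && ~~ ends_with_run k (rcons t b).
Proof.
rewrite {1}/no_run size_rcons -addn1 iotaD all_cat add0n prefixes_rcons /= andbT.
by rewrite -(size_rcons t b) take_size.
Qed.

Lemma first_run_at_rcons k t b :
  first_run_at k (rcons t b) = ends_with_run k (rcons t b) && no_run k t.
Proof. by rewrite first_run_atE size_rcons prefixes_rcons. Qed.

Lemma no_run_ends k s : no_run k s -> ~~ ends_with_run k s.
Proof.
by move=> /allP /(_ (size s)); rewrite take_size mem_iota add0n ltnSn; apply.
Qed.

Lemma rcons_nseq (T : Type) n (x : T) : rcons (nseq n x) x = nseq n.+1 x.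
Proof. by elim: n => //= n ->. Qed.

Lemma no_run_cat_false k t j :
  (j < k)%N -> no_run k (t ++ false :: nseq j true) = no_run k t.
Proof.
elim: j => [|j IHj] ltjk.
  by rewrite cats1 no_run_rcons -cats1 (@ends_with_run_false _ t 0) ?andbT.
rewrite -rcons_nseq -rcons_cons -rcons_cat no_run_rcons IHj 1?ltnW //.
by rewrite rcons_cat rcons_cons rcons_nseq ends_with_run_false ?andbT.
Qed.

Lemma first_run_at_size k s :
  size s = k -> first_run_at k s = (s == nseq k true).
Proof.
move=> sz; rewrite first_run_atE.
have -> : all (fun m => ~~ ends_with_run k (take m s)) (iota 0 (size s)).
  apply/allP => m; rewrite mem_iota add0n => /andP[_ ltm].
  by rewrite /ends_with_run size_take ltm -sz leqNgt ltm.
by rewrite andbT -[s]cat0s ends_with_run_cat.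
Qed.

Lemma first_run_at_cat k t r : (0 < k)%N -> size r = k.+1 ->
  first_run_at k (t ++ r) = no_run k t && (r == false :: nseq k true).
Proof.
case: k => // k _; case: r => // x r [sz].
have [->|ne] := eqVneq r (nseq k.+1 true); last first.
  rewrite /first_run_at -cat_rcons ends_with_run_cat // (negbTE ne) /=.
  by rewrite eqseq_cons (negbTE ne) andbF andbF.
have last_flip : t ++ x :: nseq k.+1 true = rcons (t ++ x :: nseq k true) true.
  by rewrite rcons_cat rcons_cons rcons_nseq.
have ends_run : ends_with_run k.+1 (t ++ x :: nseq k.+1 true).
  by rewrite -cat_rcons ends_with_run_cat ?size_nseq.
rewrite last_flip first_run_at_rcons -last_flip ends_run /=.
case: x {last_flip ends_run} => /=; last by rewrite no_run_cat_false ?eqxx ?andbT.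
rewrite andbF; apply/negbTE/negP => /no_run_ends.
by rewrite -[true :: _]/(nseq k.+1 true) ends_with_run_cat ?size_nseq ?eqxx.
Qed.

Definition records n : seq (seq bool) := [seq val t | t : n.-tuple bool].

Lemma mem_records n s : (s \in records n) = (size s == n).
Proof.
apply/mapP/idP => [[t _ ->]|/eqP sz]; first by rewrite size_tuple.
by exists (Tuple (introT eqP sz)); rewrite ?mem_enum.
Qed.

Lemma uniq_records n : uniq (records n).
Proof. by rewrite map_inj_uniq ?enum_uniq //; exact: val_inj. Qed.

Lemma big_tuple_records {R : nmodType} n (P : pred (seq bool)) (F : seq bool -> R) :
  \sum_(t : n.-tuple bool | P t) F t = \sum_(s <- records n | P s) F s.
Proof. by rewrite big_map enumT. Qed.

Lemma big_records_perm {R : nmodType} n (l : seq (seq bool)) (F : seq bool -> R) :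
  uniq l -> (forall s, (s \in l) = (size s == n)) ->
  \sum_(s <- records n) F s = \sum_(s <- l) F s.
Proof.
move=> uniq_l mem_l; apply/perm_big/uniq_perm => // [|s]; first exact: uniq_records.
by rewrite mem_records mem_l.
Qed.

Lemma big_records_cat {R : nmodType} m j (F : seq bool -> R) :
  \sum_(s <- records (m + j)) F s =
  \sum_(t <- records m) \sum_(r <- records j) F (t ++ r).
Proof.
rewrite (@big_records_perm _ _ [seq t ++ r | t <- records m, r <- records j]).
- by rewrite big_allpairs_dep.
- apply: allpairs_uniq; [exact: uniq_records | exact: uniq_records |].
  move=> [t1 r1] [t2 r2] /allpairsP[[x1 y1] /= [+ _ [-> _]]]
    /allpairsP[[x2 y2] /= [+ _ [-> _]]] /= /eqP.
  rewrite !mem_records => /eqP sz1 /eqP sz2.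
  by rewrite eqseq_cat ?sz1 ?sz2 // => /andP[/eqP -> /eqP ->].
- move=> s; apply/allpairsP/idP => [[[t r] /= [+ + ->]]|/eqP sz].
    by rewrite !mem_records size_cat => /eqP -> /eqP ->.
  exists (take m s, drop m s).
  rewrite /= cat_take_drop !mem_records size_take size_drop sz addKn eqxx.
  by split => //; case: ltnP => //= h; lia.
Qed.

Lemma big_records_rcons {R : nmodType} n (F : seq bool -> R) :
  \sum_(s <- records n.+1) F s =
  \sum_(t <- records n) (F (rcons t true) + F (rcons t false)).
Proof.
rewrite -addn1 big_records_cat; apply: eq_bigr => t _.
rewrite (@big_records_perm _ _ [:: [:: true]; [:: false]]) //.
  by rewrite big_cons big_seq1 !cats1.
by case=> [|b [|]] //=; case: b.
Qed.

Section RunProbabilities.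
Context {R : comPzRingType} (p : R) (k : nat).

Definition probY_gt n : R :=
  \sum_(s : n.-tuple bool | no_run k s) flip_weight p s.

Lemma probYE n : probY p k n =
  \sum_(s <- records n) (if first_run_at k s then flip_weight p s else 0).
Proof. by rewrite /probY big_tuple_records big_mkcond. Qed.

Lemma probY_gtE n : probY_gt n =
  \sum_(s <- records n) (if no_run k s then flip_weight p s else 0).
Proof. by rewrite /probY_gt big_tuple_records big_mkcond. Qed.

Lemma flip_weight_cat s t : flip_weight p (s ++ t) = flip_weight p s * flip_weight p t.
Proof. exact: big_cat. Qed.

Lemma flip_weight_rcons s b :
  flip_weight p (rcons s b) = flip_weight p s * (if b then p else 1 - p).
Proof. by rewrite -cats1 flip_weight_cat /flip_weight big_seq1. Qed.

Lemma flip_weight_nseq n : flip_weight p (nseq n true) = p ^+ n.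
Proof. by rewrite /flip_weight big_nseq iter_mulr_1. Qed.

Lemma split_last_flip t b (x : R) :
  (if no_run k (rcons t b) then x else 0) + (if first_run_at k (rcons t b) then x else 0)
  = if no_run k t then x else 0.
Proof.
by rewrite no_run_rcons first_run_at_rcons; case: no_run; case: ends_with_run;
  rewrite ?addr0 ?add0r.
Qed.

Lemma probY_gt_zero : (0 < k)%N -> probY_gt 0 = 1.
Proof.
move=> k_gt0; rewrite probY_gtE.
rewrite (@big_records_perm _ _ [:: [::]]) ?big_seq1 //; last by case.
by rewrite /no_run /ends_with_run /= leqNgt k_gt0 /flip_weight big_nil.
Qed.

Lemma probY_gtS n : probY_gt n = probY_gt n.+1 + probY p k n.+1.
Proof.
rewrite !probY_gtE probYE -big_split /=.
rewrite big_records_rcons; apply: eq_bigr => t _.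
rewrite !flip_weight_rcons !split_last_flip.
by case: no_run; rewrite ?addr0 // -mulrDr addrC subrK mulr1.
Qed.

Lemma probY_small n : (n < k)%N -> probY p k n = 0.
Proof.
move=> ltnk; rewrite /probY big1 // => s.
by rewrite /first_run_at /ends_with_run size_tuple leqNgt ltnk.
Qed.

Lemma probY_run : probY p k k = p ^+ k.
Proof.
rewrite /probY (eq_bigl (pred1 (nseq_tuple k true))) ?big_pred1_eq ?flip_weight_nseq //.
by move=> s; rewrite first_run_at_size ?size_tuple.
Qed.

Lemma probY_after_run m : (0 < k)%N ->
  probY p k (m + k).+1 = (1 - p) * p ^+ k * probY_gt m.
Proof.
move=> k_gt0; rewrite probYE probY_gtE.
rewrite -addnS big_records_cat mulr_sumr; apply: eq_bigr => t _.
rewrite (bigD1_seq (false :: nseq k true)) ?mem_records ?uniq_records /= ?size_nseq //.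
rewrite big1_seq => [|r /andP[/negbTE ne]]; last first.
  by rewrite mem_records => /eqP sz; rewrite first_run_at_cat ?ne ?andbF.
rewrite first_run_at_cat /= ?size_nseq // eqxx andbT addr0.
by case: no_run; rewrite ?mulr0 // flip_weight_cat -cat1s flip_weight_cat flip_weight_nseq
  /flip_weight big_seq1 mulrC.
Qed.

End RunProbabilities.

Lemma natr_mul_expr_le {R : realFieldType} (y : R) m :
  0 <= y < 1 -> m%:R * y ^+ m <= (1 - y)^-1.
Proof.
case/andP => y_ge0 y_lt1; have y1_gt0 : 0 < 1 - y by rewrite subr_gt0.
have le_geo : m%:R * y ^+ m * (1 - y) <= 1 - y ^+ m.
  elim: m => [|n IHn]; first by rewrite expr0 subrr !mul0r.
  have yn_ge0 : 0 <= y ^+ n by exact: exprn_ge0.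
  have yn_le1 : y ^+ n <= 1 by rewrite exprn_ile1 // ltW.
  have := ler_wpM2l y_ge0 IHn; have : 0 <= (1 - y) * (1 - y * y ^+ n).
    by apply: mulr_ge0; rewrite subr_ge0 ?mulr_ile1 // ltW.
  rewrite exprS -natr1; nra.
rewrite -div1r ler_pdivlMr //; apply: le_trans le_geo _.
by rewrite lerBlDr lerDl exprn_ge0.
Qed.

Lemma is_cvg_series_natr_geometric {R : realType} (i : nat) (z : R) :
  0 <= z < 1 -> cvgn (series (fun m : nat => m%:R ^+ i * z ^+ m)).
Proof.
elim: i z => [|i IHi] z /andP[z_ge0 z_lt1].
  have -> : (fun m : nat => m%:R ^+ 0 * z ^+ m) = geometric 1 z.
    by apply/funext => m; rewrite expr0.
  by apply: is_cvg_geometric_series; rewrite ger0_norm.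
(* Compare with sum_m m^i y^m for y = sqrt z, using m y^m <= 1/(1-y). *)
pose y := Num.sqrt z.
have y_ge0 : 0 <= y by exact: sqrtr_ge0.
have y_lt1 : y < 1 by rewrite /y -sqrtr1 ltr_sqrt.
apply: (@series_le_cvg _ _ (fun m => (1 - y)^-1 * (m%:R ^+ i * y ^+ m))).
- by move=> m; rewrite mulr_ge0 ?exprn_ge0.
- by move=> m; rewrite mulr_ge0 ?mulr_ge0 ?exprn_ge0 // invr_ge0 subr_ge0 ltW.
- move=> m; rewrite -(sqr_sqrtr z_ge0) -/y -exprM mulnC exprM exprS expr2.
  rewrite mulrACA ler_wpM2r ?mulr_ge0 ?exprn_ge0 //.
  by rewrite natr_mul_expr_le // y_ge0.
- by apply/is_cvg_seriesZ/IHi; rewrite y_ge0.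
Qed.

Lemma exprD1nB {R : comPzRingType} (x : R) j :
  (x + 1) ^+ j - x ^+ j = \sum_(i < j) 'C(j, i)%:R * x ^+ i.
Proof.
rewrite exprD1n big_ord_recr /= binn mulr1n addrK.
by apply: eq_bigr => i _; rewrite mulr_natl.
Qed.

Section RenewalMoments.
Local Open Scope classical_set_scope.
Context {R : realType} {p : R} {k : nat} {a u : nat -> R}.
Hypotheses (p_gt0 : 0 < p) (p_lt1 : p < 1) (k_gt0 : (0 < k)%N).
Local Notation P := (p ^+ k).
Local Notation c := ((1 - p) * p ^+ k).
Local Notation K := (k%:R : R).
Hypotheses (u0 : u 0 = 1) (uS : forall n, u n = u n.+1 + a n.+1)
  (a_small : forall n, (n < k)%N -> a n = 0) (a_run : a k = P)
  (a_after_run : forall m, a (m + k).+1 = c * u m)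
  (u_ge0 : forall n, 0 <= u n).

Lemma renewal_rate_gt0 : 0 < c.
Proof. by rewrite mulr_gt0 ?subr_gt0 ?exprn_gt0. Qed.

Lemma renewal_rate_lt1 : c < 1.
Proof.
have : p ^+ k <= 1 by rewrite exprn_ile1 ?ltW.
have : 0 < p * p ^+ k by rewrite mulr_gt0 ?exprn_gt0.
lra.
Qed.

Lemma a_ge0 n : 0 <= a n.
Proof.
have [ltnk|ltkn|->] := ltngtP n k; first by rewrite a_small.
  by rewrite -(subnK ltkn) addnS a_after_run mulr_ge0 // ltW // renewal_rate_gt0.
by rewrite a_run exprn_ge0 // ltW.
Qed.

Lemma u_nonincreasing : nonincreasing_seq u.
Proof. by apply/nonincreasing_seqP => n; rewrite [u n]uS lerDl a_ge0. Qed.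

Lemma u_geometric n : u n * (1 - c) ^+ k <= (1 - c) ^+ n.
Proof.
have rho_ge0 : 0 <= 1 - c by rewrite subr_ge0 ltW // renewal_rate_lt1.
have rho_le1 : 1 - c <= 1 by rewrite lerBlDr lerDl ltW // renewal_rate_gt0.
elim: n => [|n IHn]; first by rewrite u0 mul1r exprn_ile1.
have [ltnk|lekn] := ltnP n k.
  rewrite -[X in _ <= X]mul1r ler_pM ?exprn_ge0 ?u_ge0 //.
    by rewrite -u0 u_nonincreasing.
  by rewrite ler_wiXn2l.
have decay : u n.+1 <= (1 - c) * u n.
  have := uS n; rewrite -{3}(subnK lekn) a_after_run.
  have := u_nonincreasing _ _ (leq_subr k n).
  have := renewal_rate_gt0; nra.
rewrite exprS; apply: le_trans (ler_wpM2l rho_ge0 IHn); rewrite mulrA.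
by rewrite ler_wpM2r ?exprn_ge0.
Qed.

Lemma is_cvg_series_u i : cvgn (series (fun m : nat => m%:R ^+ i * u m)).
Proof.
have rho_gt0 : 0 < 1 - c by rewrite subr_gt0 renewal_rate_lt1.
have rhok_gt0 : 0 < (1 - c) ^+ k by rewrite exprn_gt0.
apply: (@series_le_cvg _ _
  (fun m => (1 - c) ^- k * (m%:R ^+ i * (1 - c) ^+ m))).
- by move=> m; rewrite mulr_ge0 ?exprn_ge0.
- by move=> m; rewrite !mulr_ge0 ?invr_ge0 ?exprn_ge0 // ltW.
- move=> m; rewrite mulrCA ler_wpM2l ?exprn_ge0 // mulrC ler_pdivlMr //.
  exact: u_geometric.
- apply/is_cvg_seriesZ/is_cvg_series_natr_geometric.
  by rewrite ltW //= ltrBlDl ltrDr renewal_rate_gt0.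
Qed.

Let U i := limn (series (fun m : nat => m%:R ^+ i * u m)).

Lemma cvg_natr_u i : (fun m : nat => m%:R ^+ i * u m) @ \oo --> 0.
Proof. exact: cvg_series_cvg_0 (is_cvg_series_u i). Qed.

Lemma cvg_series_poly_u (g d : nat -> R) n :
  (forall m, g m = \sum_(i < n) d i * m%:R ^+ i) ->
  (fun N => \sum_(0 <= m < N) g m * u m) @ \oo --> \sum_(i < n) d i * U i.
Proof.
move=> gE; have -> : (fun N => \sum_(0 <= m < N) g m * u m) =
    (fun N => \sum_(i < n) d i * series (fun m : nat => m%:R ^+ i * u m) N).
  apply/funext => N; under eq_bigr do rewrite gE mulr_suml.
  rewrite exchange_big /=; apply: eq_bigr => i _; rewrite /series /= mulr_sumr.
  by apply: eq_bigr => m _; rewrite mulrA.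
clear gE; elim: n => [|n IHn].
  by under eq_fun do rewrite big_ord0; rewrite big_ord0; exact: cvg_cst.
under eq_fun do rewrite big_ord_recr /=; rewrite big_ord_recr /=.
by apply: cvgD => //; apply: cvgM; [exact: cvg_cst | exact: is_cvg_series_u].
Qed.

Lemma abel_summation (f : nat -> R) N :
  \sum_(0 <= n < N.+1) f n * a n =
  \sum_(0 <= m < N) (f m.+1 - f m) * u m + f 0%N * u 0%N - f N * u N.
Proof.
elim: N => [|N IHN]; first by rewrite big_nat1 big_geq // a_small // mulr0 add0r subrr.
rewrite big_nat_recr //= IHN big_nat_recr //= [u N]uS; ring.
Qed.

Lemma renewal_summation (g : nat -> R) N :
  \sum_(0 <= n < (N + k).+1) g n * a n =
  P * g k + c * \sum_(0 <= m < N) g (m + k).+1 * u m.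
Proof.
elim: N => [|N IHN].
  rewrite add0n big_nat_recr //= big1_seq => [|n]; last first.
    by rewrite mem_index_iota => /andP[_ /andP[_ /a_small ->]]; rewrite mulr0.
  by rewrite add0r big_geq // mulr0 addr0 a_run mulrC.
by rewrite addSn big_nat_recr //= IHN big_nat_recr //= a_after_run; ring.
Qed.

Lemma cvg_moment_u j :
  (fun N => \sum_(0 <= n < N) n%:R ^+ j * a n) @ \oo -->
  \sum_(i < j) 'C(j, i)%:R * U i + (j == 0)%:R.
Proof.
rewrite -(cvg_shiftn 1).
under eq_fun do rewrite addn1 abel_summation u0 mulr1 mulr0n expr0n.
rewrite -[_ + _]subr0; apply: cvgB; last exact: cvg_natr_u.
apply: cvgD; last exact: cvg_cst.
apply: (@cvg_series_poly_u (fun m => m.+1%:R ^+ j - m%:R ^+ j)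
  (fun i => 'C(j, i)%:R)) => m.
by rewrite -natr1 exprD1nB.
Qed.

Lemma cvg_moment_renewal j :
  (fun N => \sum_(0 <= n < N) n%:R ^+ j * a n) @ \oo -->
  P * K ^+ j + c * \sum_(i < j.+1) ('C(j, i)%:R * (K + 1) ^+ (j - i)) * U i.
Proof.
rewrite -(cvg_shiftn k.+1); under eq_fun do rewrite addnS renewal_summation.
apply: cvgD; first exact: cvg_cst.
apply: cvgM; first exact: cvg_cst.
apply: (@cvg_series_poly_u (fun m => (m + k).+1%:R ^+ j)
  (fun i => 'C(j, i)%:R * (K + 1) ^+ (j - i))) => m.
rewrite -addnS natrD addrC exprDn; apply: eq_bigr => i _.
by rewrite -natr1 -mulrA mulr_natl.
Qed.

Lemma U_recursion j :
  U j = (\sum_(i < j) 'C(j, i)%:R * U i + (j == 0)%:R - P * K ^+ j) / c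
        - \sum_(i < j) ('C(j, i)%:R * (K + 1) ^+ (j - i)) * U i.
Proof.
have := norm_cvg_unique (cvg_moment_u j) (cvg_moment_renewal j).
rewrite big_ord_recr /= subnn binn expr0 mulr1 mul1r => ->.
by rewrite addrAC subrr add0r (mulrC c) mulfK ?gt_eqF ?renewal_rate_gt0 // addrC addrK.
Qed.

Lemma cvg_moments_closed_form :
  let q := 1 - p in
  [/\ (fun N => \sum_(0 <= n < N) (n%:R) ^+ 1 * a n) @ \oo --> (1 - P) / (q * P),
      (fun N => \sum_(0 <= n < N) (n%:R) ^+ 2 * a n) @ \oo -->
        (2 * (1 - P) / (q ^+ 2 * P ^+ 2) - (2 * K + 1 - P) / (q * P)),
      (fun N => \sum_(0 <= n < N) (n%:R) ^+ 3 * a n) @ \oo -->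
        (6 * (1 - P) / (q ^+ 3 * P ^+ 3)
         - (12 * K + 6 - (6 * K + 6) * P) / (q ^+ 2 * P ^+ 2)
         + (3 * K ^+ 2 + 3 * K + 1 - P) / (q * P)) &
      (fun N => \sum_(0 <= n < N) (n%:R) ^+ 4 * a n) @ \oo -->
        (24 * (1 - P) / (q ^+ 4 * P ^+ 4)
         - (72 * K + 36 - (48 * K + 36) * P) / (q ^+ 3 * P ^+ 3)
         + (48 * K ^+ 2 + 48 * K + 14 - (12 * K ^+ 2 + 24 * K + 14) * P)
             / (q ^+ 2 * P ^+ 2)
         - (4 * K ^+ 3 + 6 * K ^+ 2 + 4 * K + 1 - P) / (q * P))].
Proof.
move=> q; have q_neq0 : q != 0 by rewrite subr_eq0 gt_eqF.
have P_neq0 : P != 0 by rewrite expf_neq0 // gt_eqF.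
have U0 := U_recursion 0; have U1 := U_recursion 1.
have U2 := U_recursion 2; have U3 := U_recursion 3.
rewrite !big_ord_recr !big_ord0 /binomial /= in U0 U1 U2 U3.
split; [move: (cvg_moment_u 1) | move: (cvg_moment_u 2) |
        move: (cvg_moment_u 3) | move: (cvg_moment_u 4)];
  rewrite !big_ord_recr !big_ord0 /binomial /=; congr (_ --> _);
  by rewrite ?U3 ?U2 ?U1 U0 /q; field; rewrite q_neq0 P_neq0.
Qed.

End RenewalMoments.

Lemma flip_weight_ge0 {R : numDomainType} (p : R) s :
  0 <= p <= 1 -> 0 <= flip_weight p s.
Proof.
by case/andP=> p_ge0 p_le1; apply: prodr_ge0 => -[]; rewrite ?subr_ge0.
Qed.

Lemma probY_gt_ge0 {R : numDomainType} (p : R) k n :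
  0 <= p <= 1 -> 0 <= probY_gt p k n.
Proof. by move=> p01; apply: sumr_ge0 => s _; exact: flip_weight_ge0. Qed.

Lemma sum_exprVn {R : fieldType} (p : R) k : p != 0 -> p != 1 ->
  \sum_(1 <= i < k.+1) p ^- i = (1 - p ^+ k) / ((1 - p) * p ^+ k).
Proof.
move=> p_neq0 p_neq1; have q_neq0 : 1 - p != 0 by rewrite subr_eq0 eq_sym.
elim: k => [|k IHk]; first by rewrite big_geq // expr0 subrr mul0r.
by rewrite big_nat_recr //= IHk exprS; field; rewrite q_neq0 p_neq0 expf_neq0.
Qed.

Theorem corollary3p2 (R : realType) (p : R) (k : nat)
  (hp0 : 0 < p) (hp1 : p < 1) (hk : (1 <= k)%N) :
  let q := 1 - p in
  let P := p ^+ k in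
  let K := (k%:R : R) in
  [/\ moment_is p k 1 (\sum_(1 <= i < k.+1) p ^- i)
         /\ \sum_(1 <= i < k.+1) p ^- i = (1 - P) / (q * P),
      moment_is p k 2
        (2 * (1 - P) / (q ^+ 2 * P ^+ 2) - (2 * K + 1 - P) / (q * P)),
      moment_is p k 3
        (6 * (1 - P) / (q ^+ 3 * P ^+ 3)
         - (12 * K + 6 - (6 * K + 6) * P) / (q ^+ 2 * P ^+ 2)
         + (3 * K ^+ 2 + 3 * K + 1 - P) / (q * P)) &
      moment_is p k 4
        (24 * (1 - P) / (q ^+ 4 * P ^+ 4)
         - (72 * K + 36 - (48 * K + 36) * P) / (q ^+ 3 * P ^+ 3)
         + (48 * K ^+ 2 + 48 * K + 14 - (12 * K ^+ 2 + 24 * K + 14) * P)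
             / (q ^+ 2 * P ^+ 2)
         - (4 * K ^+ 3 + 6 * K ^+ 2 + 4 * K + 1 - P) / (q * P))].
Proof.
move=> q P K.
have p01 : 0 <= p <= 1 by rewrite !ltW.
have [M1 M2 M3 M4] := cvg_moments_closed_form hp0 hp1 hk (probY_gt_zero p k hk)
  (probY_gtS p k) (probY_small p k) (probY_run p k)
  (fun m => probY_after_run p k m hk) (fun n => probY_gt_ge0 p k n p01).
have geom := sum_exprVn p k (lt0r_neq0 hp0) (negbT (lt_eqF hp1)).
by split => //; rewrite /moment_is geom.
Qed.
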